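(* For a consistent and complete definite action theory $(I,D)$, there is an initial $\mathbf{S5}$-state $(M_0,s_0)$ of $(I,D)$ with $|M_0[S]|\le 2^{|\mathcal F|}$, unique up to equivalence, such that every initial $\mathbf{S5}$-state $(M,s)$ of $(I,D)$ is equivalent to $(M_0,s_0)$.
   Context: Agents $\mathcal{AG}=\{1,\dots,n\}$ (finite) and a finite set $\mathcal F$ of fluents. Belief formulae are built from propositional (fluent) formulae over $\mathcal F$ with $\mathbf B_i$, Boolean connectives and $\mathbf E_\alpha,\mathbf C_\alpha$; $\mathbf C=\mathbf C_{\mathcal{AG}}$. Kripke structure $M$: worlds $M[S]$, interpretations $M[\pi](u)\subseteq\mathcal F$, relations $M[i]$; state $(M,s)$; standard semantics ($\mathbf B_i\varphi$: $\varphi$ at all $M[i]$-successors; $\mathbf E_\alpha$: all $\mathbf B_i$, $i\in\alpha$; $\mathbf C_\alpha\varphi$: $\mathbf E^k_\alpha\varphi$ for all $k\ge 0$). $\mathbf{S5}$: every $M[i]$ an equivalence relation. Two states are equivalent if they satisfy the same belief formulae. Action theory $(I,D)$: $D$ a domain (action descriptions, irrelevant to initial states) and $I$ a set of statements ''initially $\varphi$''; $T_I=\{\varphi\mid$ ''initially $\varphi$'' $\in I\}$; consistent if $T_I$ is satisfiable and $D$ is consistent. Initial $\mathbf{S5}$-state: $\mathbf{S5}$-state satisfying all of $T_I$. Definite: every statement of $I$ is of the form initially $\varphi$, initially $\mathbf C\varphi$, initially $\mathbf C(\mathbf B_i\varphi)$, initially $\mathbf C(\mathbf B_i\varphi\vee\mathbf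 B_i\neg\varphi)$ or initially $\mathbf C(\neg\mathbf B_i\varphi\wedge\neg\mathbf B_i\neg\varphi)$ ($\varphi$ fluent formula, $i$ agent), and for every fluent formula $\varphi$ and agent $i$, $I$ contains a statement of one of the last three forms with this $i,\varphi$. A definite action theory is complete if the set of fluent literals $\ell$ appearing in the statements of $I$ of the forms initially $\varphi$, initially $\mathbf C\varphi$, initially $\mathbf C(\mathbf B_i\varphi)$ is a complete interpretation of $\mathcal F$ (contains exactly one of $f,\neg f$ for every $f\in\mathcal F$). *)

From mathcomp Require Import all_boot.
Set Implicit Arguments. Unset Strict Implicit. Unset Printing Implicit Defensive.

Section Syntax.
Variables (Ag F : finType).

Inductive fform : Type :=
  | FVar of F
  | FTrue | FFalse
  | FNot of fform
  | FAnd of fform & fform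
  | FOr of fform & fform.

Inductive bform : Type :=
  | BF of fform
  | BNot of bform
  | BAnd of bform & bform
  | BOr of bform & bform
  | BB of Ag & bform
  | BE of {set Ag} & bform
  | BC of {set Ag} & bform.

Fixpoint fsat (v : F -> bool) (p : fform) : bool :=
  match p with
  | FVar f => v f
  | FTrue => true
  | FFalse => false
  | FNot q => ~~ fsat v q
  | FAnd q r => fsat v q && fsat v r
  | FOr q r => fsat v q || fsat v r
  end.

(* A Kripke structure is given by a type of worlds W, an interpretation
   pi : W -> F -> bool (pi u f = true iff f \in M[pi](u)) and relations
   R i : W -> W -> Prop for each agent i. *)

Definition Eop (W : Type) (R : Ag -> W -> W -> Prop) (alpha : {set Ag})
  (P : W -> Prop) : W -> Prop :=
  fun w => forall i, i \in alpha -> forall v, R i w v -> P v.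

Fixpoint sat (W : Type) (pi : W -> F -> bool) (R : Ag -> W -> W -> Prop)
  (w : W) (b : bform) {struct b} : Prop :=
  match b with
  | BF p => fsat (pi w) p
  | BNot c => ~ sat pi R w c
  | BAnd c d => sat pi R w c /\ sat pi R w d
  | BOr c d => sat pi R w c \/ sat pi R w d
  | BB i c => forall v, R i w v -> sat pi R v c
  | BE alpha c => forall i, i \in alpha -> forall v, R i w v -> sat pi R v c
  | BC alpha c => forall k : nat,
      iter k (Eop R alpha) (fun v => sat pi R v c) w
  end.

Definition S5 (W : Type) (R : Ag -> W -> W -> Prop) : Prop :=
  forall i, (forall u, R i u u) /\ (forall u v, R i u v -> R i v u) /\
            (forall u v x, R i u v -> R i v x -> R i u x).

Definition equiv_states (W1 : Type) (pi1 : W1 -> F -> bool)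
  (R1 : Ag -> W1 -> W1 -> Prop) (s1 : W1)
  (W2 : Type) (pi2 : W2 -> F -> bool) (R2 : Ag -> W2 -> W2 -> Prop) (s2 : W2)
  : Prop :=
  forall b : bform, sat pi1 R1 s1 b <-> sat pi2 R2 s2 b.

(* The initial part I of an action theory: the set T_I of formulae phi
   such that "initially phi" is in I (possibly infinite). *)
Definition init_theory := bform -> Prop.

Definition initial_S5_state (T : init_theory) (W : Type)
  (pi : W -> F -> bool) (R : Ag -> W -> W -> Prop) (s : W) : Prop :=
  S5 R /\ forall b, T b -> sat pi R s b.

Definition consistent_init (T : init_theory) : Prop :=
  exists (W : Type) (pi : W -> F -> bool) (R : Ag -> W -> W -> Prop) (s : W),
    initial_S5_state T pi R s.

Definition CC := BC [set: Ag].

Definition form_C_Bi (i : Ag) (p : fform) : bform := CC (BB i (BF p)).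
Definition form_C_knows (i : Ag) (p : fform) : bform :=
  CC (BOr (BB i (BF p)) (BB i (BF (FNot p)))).
Definition form_C_ignorant (i : Ag) (p : fform) : bform :=
  CC (BAnd (BNot (BB i (BF p))) (BNot (BB i (BF (FNot p))))).

Definition definite (T : init_theory) : Prop :=
  (forall b, T b ->
     (exists p, b = BF p) \/ (exists p, b = CC (BF p)) \/
     (exists i p, b = form_C_Bi i p) \/ (exists i p, b = form_C_knows i p) \/
     (exists i p, b = form_C_ignorant i p)) /\
  (forall (p : fform) (i : Ag),
     T (form_C_Bi i p) \/ T (form_C_knows i p) \/ T (form_C_ignorant i p)).

Definition is_literal (p : fform) : Prop :=
  exists f, p = FVar f \/ p = FNot (FVar f).

Definition lits_of (T : init_theory) (l : fform) : Prop :=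
  is_literal l /\ (T (BF l) \/ T (CC (BF l)) \/ exists i, T (form_C_Bi i l)).

Definition complete_init (T : init_theory) : Prop :=
  definite T /\
  forall f : F, (lits_of T (FVar f) /\ ~ lits_of T (FNot (FVar f))) \/
                (~ lits_of T (FVar f) /\ lits_of T (FNot (FVar f))).

End Syntax.

(* Satisfaction of belief formulae is invariant under bisimulation. In an
   initial S5-state of a definite theory, common knowledge of "B_i chi",
   "B_i chi or B_i ~chi" or "~B_i chi and ~B_i ~chi" for the characteristic
   formula chi of each interpretation fixes, at every reachable world and
   uniformly across initial states, which interpretations agent i considers
   possible. Hence relating reachable worlds with equal interpretations is a
   bisimulation between any two initial S5-states whose actual worlds agree,
   and completeness makes the actual worlds agree. Collapsing one initial
   state onto its interpretations gives the model with at most 2^|F| worlds. *)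
From mathcomp Require Import all_boot.
From Stdlib Require Import Classical.
Set Implicit Arguments. Unset Strict Implicit.

Section BeliefStates.
Variables (Ag F : finType).

Section Reachability.
Variables (W : Type) (R : Ag -> W -> W -> Prop) (s : W).

Inductive reach : W -> Prop :=
  | reach_root : reach s
  | reach_step w i u : reach w -> R i w u -> reach u.

Lemma iter_Eop_reach (P : W -> Prop) w :
  reach w -> (forall n, iter n (Eop R [set: Ag]) P s) ->
  forall k, iter k (Eop R [set: Ag]) P w.
Proof.
elim=> [// | v i u _ IH Rvu HC k].
by apply: (IH HC k.+1 i (in_setT i)).
Qed.

Lemma sat_CC_reach (pi : W -> F -> bool) (b : bform Ag F) w :
  sat pi R s (CC b) -> reach w -> sat pi R w b.
Proof. by move=> HC /iter_Eop_reach /(_ HC 0). Qed.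

End Reachability.

Lemma eq_fsat (v1 v2 : F -> bool) (p : fform F) : v1 =1 v2 -> fsat v1 p = fsat v2 p.
Proof. by move=> Ev; elim: p => //= [q -> | q -> r -> | q -> r ->]. Qed.

Definition chi (y : F -> bool) : fform F :=
  foldr (fun f p => FAnd (if y f then FVar f else FNot (FVar f)) p) (@FTrue F)
        (enum F).

Lemma fsat_chi (v y : F -> bool) : fsat v (chi y) <-> v =1 y.
Proof.
have -> : fsat v (chi y) = all (fun f => v f == y f) (enum F).
  by rewrite /chi; elim: (enum F) => //= f l ->; case: (y f) => /=; case: (v f).
split=> [/allP Hv f | Hv]; last by apply/allP=> f _; rewrite Hv.
by apply/eqP/Hv; rewrite mem_enum.
Qed.

Section Bisimulation.
Variables (W1 W2 : Type) (pi1 : W1 -> F -> bool) (R1 : Ag -> W1 -> W1 -> Prop)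
  (pi2 : W2 -> F -> bool) (R2 : Ag -> W2 -> W2 -> Prop).

Definition forth (V1 V2 : Type) (Q1 : Ag -> V1 -> V1 -> Prop)
    (Q2 : Ag -> V2 -> V2 -> Prop) (Z : V1 -> V2 -> Prop) : Prop :=
  forall x y i x', Z x y -> Q1 i x x' -> exists y', Q2 i y y' /\ Z x' y'.

Definition bisimulation (Z : W1 -> W2 -> Prop) : Prop :=
  [/\ forall x y, Z x y -> pi1 x =1 pi2 y,
      forth R1 R2 Z & forth R2 R1 (fun y x => Z x y)].

Variables (Z : W1 -> W2 -> Prop) (HZ : bisimulation Z).

Lemma box_bisim i (P1 : W1 -> Prop) (P2 : W2 -> Prop) x y :
  (forall x y, Z x y -> (P1 x <-> P2 y)) -> Z x y ->
  (forall x', R1 i x x' -> P1 x') <-> (forall y', R2 i y y' -> P2 y').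
Proof.
case: HZ => _ Zforth Zback HP Zxy; split=> [H y' Ry | H x' Rx].
  by have [x' [Rx Zx]] := Zback _ _ _ _ Zxy Ry; apply/(HP _ _ Zx)/H.
by have [y' [Ry Zy]] := Zforth _ _ _ _ Zxy Rx; apply/(HP _ _ Zy)/H.
Qed.

Lemma Eop_bisim alpha (P1 : W1 -> Prop) (P2 : W2 -> Prop) x y :
  (forall x y, Z x y -> (P1 x <-> P2 y)) -> Z x y ->
  Eop R1 alpha P1 x <-> Eop R2 alpha P2 y.
Proof.
by move=> HP Zxy; split=> H i Hi; apply/(box_bisim i HP Zxy); apply: H.
Qed.

Lemma sat_bisim (b : bform Ag F) x y : Z x y -> (sat pi1 R1 x b <-> sat pi2 R2 y b).
Proof.
case: (HZ) => Zval _ _.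
elim: b x y => /= [p | c IH | c IHc d IHd | c IHc d IHd | i c IH | alpha c IH | alpha c IH]
  x y Zxy.
- by rewrite (eq_fsat p (Zval _ _ Zxy)).
- by rewrite (IH _ _ Zxy).
- by rewrite (IHc _ _ Zxy) (IHd _ _ Zxy).
- by rewrite (IHc _ _ Zxy) (IHd _ _ Zxy).
- exact: box_bisim.
- exact: Eop_bisim.
- suff Hk k x' y' : Z x' y' -> (iter k (Eop R1 alpha) (fun v => sat pi1 R1 v c) x' <->
                                iter k (Eop R2 alpha) (fun v => sat pi2 R2 v c) y').
    by split=> H k; apply/(Hk k _ _ Zxy).
  by elim: k x' y' => [|k IHk] x' y' /=; [exact: IH | exact: Eop_bisim].
Qed.

End Bisimulation.

Section DefiniteTheory.
Variables (T : init_theory Ag F) (Hdef : definite T).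

Lemma initial_CC_reach W (pi : W -> F -> bool) R s w b :
  initial_S5_state T pi R s -> T (CC b) -> reach R s w -> sat pi R w b.
Proof. by case=> _ HT /HT; apply: sat_CC_reach. Qed.

Section TwoStates.
Variables (W1 W2 : Type) (pi1 : W1 -> F -> bool) (R1 : Ag -> W1 -> W1 -> Prop)
  (s1 : W1) (pi2 : W2 -> F -> bool) (R2 : Ag -> W2 -> W2 -> Prop) (s2 : W2).
Hypotheses (H1 : initial_S5_state T pi1 R1 s1) (H2 : initial_S5_state T pi2 R2 s2).

(* If [u1] and [w1] have different interpretations, then of the three
   statements about [p := ~ chi (pi1 u1)] allowed in T, "C B_i p" fails at
   [u1] and "C (B_i p \/ B_i ~p)" fails at [u1] or, by reflexivity, at [w1];
   so T says that i is ignorant of [p], which at [w2] gives the witness. *)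
Lemma initial_step_match w1 w2 i u1 :
  reach R1 s1 w1 -> reach R2 s2 w2 -> pi1 w1 =1 pi2 w2 -> R1 i w1 u1 ->
  exists u2, R2 i w2 u2 /\ pi2 u2 =1 pi1 u1.
Proof.
move=> r1 r2 Ew Ru1.
have [Hu | Hu] := classic (pi1 u1 =1 pi1 w1).
  by exists w2; split=> [|f]; [case: (H2.1 i) | rewrite Hu Ew].
have [refl1 _] := H1.1 i.
have chi_u1 : fsat (pi1 u1) (chi (pi1 u1)) by apply/fsat_chi.
case: (Hdef.2 (FNot (chi (pi1 u1))) i) => [| [|] ] HT.
- by have /= /(_ u1 Ru1) := initial_CC_reach H1 HT r1; rewrite chi_u1.
- have /= [/(_ u1 Ru1) | /(_ w1 (refl1 w1))] := initial_CC_reach H1 HT r1.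
    by rewrite chi_u1.
  by rewrite negbK => /fsat_chi Hw; case: Hu => f; rewrite Hw.
- have /= [Hign _] := initial_CC_reach H2 HT r2.
  apply: NNPP => Hno; apply: Hign => u2 Ru2; apply/negP => /fsat_chi Hu2.
  by apply: Hno; exists u2.
Qed.

Definition matched (w1 : W1) (w2 : W2) : Prop :=
  [/\ reach R1 s1 w1, reach R2 s2 w2 & pi1 w1 =1 pi2 w2].

Lemma forth_matched : forth R1 R2 matched.
Proof.
move=> w1 w2 i u1 [r1 r2 Ew] Ru1.
have [u2 [Ru2 Eu]] := initial_step_match r1 r2 Ew Ru1.
exists u2; split=> //; split; [exact: reach_step r1 Ru1 | exact: reach_step r2 Ru2 |].
by move=> f; rewrite Eu.
Qed.

End TwoStates.

Lemma matched_sym W1 W2 (pi1 : W1 -> F -> bool) R1 s1 (pi2 : W2 -> F -> bool) R2 s2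
    w1 w2 :
  matched pi1 R1 s1 pi2 R2 s2 w1 w2 -> matched pi2 R2 s2 pi1 R1 s1 w2 w1.
Proof. by case=> r1 r2 Ew; split=> // f; rewrite Ew. Qed.

Lemma initial_states_equiv W1 W2 (pi1 : W1 -> F -> bool) R1 s1
    (pi2 : W2 -> F -> bool) R2 s2 :
  initial_S5_state T pi1 R1 s1 -> initial_S5_state T pi2 R2 s2 ->
  pi1 s1 =1 pi2 s2 -> equiv_states pi1 R1 s1 pi2 R2 s2.
Proof.
move=> H1 H2 Es b; apply: (sat_bisim (Z := matched pi1 R1 s1 pi2 R2 s2)).
- split=> [w1 w2 [] // | | w2 w1 i u2 M Ru2].
    exact: forth_matched.
  have [u1 [Ru1 M']] := forth_matched H2 H1 (matched_sym M) Ru2.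
  by exists u1; split=> //; apply: matched_sym.
- by split=> //; apply: reach_root.
Qed.

Lemma lits_of_sat W (pi : W -> F -> bool) R s l :
  initial_S5_state T pi R s -> lits_of T l -> fsat (pi s) l.
Proof.
move=> Hs [_ [HT | [HT | [i HT]]]]; first exact: (Hs.2 _ HT).
  exact: (initial_CC_reach Hs HT (reach_root R s)).
by apply: (initial_CC_reach Hs HT (reach_root R s)); case: (Hs.1 i).
Qed.

Lemma complete_actual_world W1 W2 (pi1 : W1 -> F -> bool) R1 s1
    (pi2 : W2 -> F -> bool) R2 s2 :
  complete_init T -> initial_S5_state T pi1 R1 s1 ->
  initial_S5_state T pi2 R2 s2 -> pi1 s1 =1 pi2 s2.
Proof.
move=> [_ Hcomp] H1 H2 f.
case: (Hcomp f) => [[L _] | [_ L]];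
  have /= L1 := lits_of_sat H1 L; have /= L2 := lits_of_sat H2 L.
  by rewrite L1 L2.
by rewrite (negbTE L1) (negbTE L2).
Qed.

Section InterpretationModel.
Variables (W : Type) (pi : W -> F -> bool) (R : Ag -> W -> W -> Prop) (s : W).
Hypothesis (Hs : initial_S5_state T pi R s).

Definition interp (w : W) : {ffun F -> bool} := [ffun f => pi w f].

(* The disjunct [x = y] makes [interp_rel i] reflexive also on the
   interpretations of no reachable world. *)
Definition interp_rel (i : Ag) (x y : {ffun F -> bool}) : Prop :=
  x = y \/ exists w u, [/\ reach R s w, R i w u, pi w =1 x & pi u =1 y].

Definition interp_sat (x : {ffun F -> bool}) (f : F) : bool := x f.

Lemma interp_rel_S5 : S5 interp_rel.
Proof.
move=> i; have [_ [symR transR]] := Hs.1 i.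
split; [by left | split].
  move=> x y [-> | [w [u [rw Rwu Ew Eu]]]]; first by left.
  by right; exists u, w; split=> //; [exact: reach_step rw Rwu | exact: symR].
move=> x y z [-> // | [w [u [rw Rwu Ew Eu]]]].
case=> [<- | [v [t [rv Rvt Ev Et]]]]; first by right; exists w, u.
have Evu : pi v =1 pi u by move=> f; rewrite Ev Eu.
have [t' [Rut' Et']] := initial_step_match Hs Hs rv (reach_step rw Rwu) Evu Rvt.
by right; exists w, t'; split=> // [|f]; [exact: transR Rut' | rewrite Et'].
Qed.

Definition interp_of (w : W) (x : {ffun F -> bool}) : Prop :=
  reach R s w /\ pi w =1 x.

Lemma interp_of_bisim : bisimulation pi R interp_sat interp_rel interp_of.
Proof.
split=> [w x [] // | w x i u [rw Ew] Rwu | x w i y [rw Ew] [<- | ]].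
- exists (interp u); split; last by split=> [|f]; [exact: reach_step Rwu | rewrite ffunE].
  by right; exists w, u; split=> // f; rewrite ffunE.
- by exists w; split=> //; case: (Hs.1 i).
- case=> [v [t [rv Rvt Ev Et]]].
  have Evw : pi v =1 pi w by move=> f; rewrite Ev Ew.
  have [u [Rwu Eu]] := initial_step_match Hs Hs rv rw Evw Rvt.
  by exists u; split=> //; split=> [|f]; [exact: reach_step Rwu | rewrite Eu].
Qed.

Lemma interp_initial : initial_S5_state T interp_sat interp_rel (interp s).
Proof.
split; first exact: interp_rel_S5.
have Zs : interp_of s (interp s) by split=> [|f]; [exact: reach_root | rewrite ffunE].
by move=> b /Hs.2 /(sat_bisim interp_of_bisim b Zs).
Qed.

End InterpretationModel.

End DefiniteTheory.

End BeliefStates.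

Theorem proposition15 (Ag F : finType) (T : init_theory Ag F) :
  consistent_init T -> definite T -> complete_init T ->
  exists (W0 : finType) (pi0 : W0 -> F -> bool) (R0 : Ag -> W0 -> W0 -> Prop)
         (s0 : W0),
    initial_S5_state T pi0 R0 s0 /\ #|W0| <= 2 ^ #|F| /\
    (forall (W : Type) (pi : W -> F -> bool) (R : Ag -> W -> W -> Prop) (s : W),
       initial_S5_state T pi R s -> equiv_states pi R s pi0 R0 s0).
Proof.
move=> [W [pi [R [s Hs]]]] Hdef Hcomp.
have H0 := interp_initial Hdef Hs.
exists {ffun F -> bool}, (@interp_sat F), (interp_rel pi R s), (interp pi s).
split; [exact: H0 | split; first by rewrite card_ffun card_bool].
move=> W' pi' R' s' Hs'.
apply: (initial_states_equiv Hdef Hs' H0).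
exact: (complete_actual_world Hcomp Hs' H0).
Qed.
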